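(* Let $d,k$ be positive integers, let $\mathscr{A}\subseteq\mathbb{R}^d$, $\mathscr{B}\subseteq\mathbb{R}^k$, let $\boldsymbol{f}:\mathscr{A}\to\mathbb{R}^k$ and let $g:\mathscr{A}\to\mathbb{R}$. Let $X$ be a random vector in $\mathbb{R}^d$ such that $\Pr\{X\in\mathscr{A}\}=1$, $\mathbb{E}[\boldsymbol{f}(X)]$ exists and $\mathbb{E}[\boldsymbol{f}(X)]\in\mathscr{B}$, and such that $\mathbb{E}[g(X)]$ exists (as a finite real number). Let $\mathscr{Y}$ be the family of all discrete random vectors $Y$ in $\mathbb{R}^d$ such that $\Pr\{Y\in\mathscr{A}\}=1$, $\mathbb{E}[\boldsymbol{f}(Y)]\in\mathscr{B}$, and $Y$ has at most $k+1$ distinct possible values. Then \[ \mathbb{E}[g(X)]\le \sup_{Y\in\mathscr{Y}}\mathbb{E}[g(Y)]. \]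
   Context: A vector $x$ is a possible value of a discrete random vector $Y$ if $\Pr\{Y=x\}>0$. All sets and functions involved are assumed measurable so that the probabilities and expectations make sense. The supremum of an empty set is defined to be $0$. *)

From HB Require Import structures.
From mathcomp Require Import all_boot all_order all_algebra.
From mathcomp Require Import all_classical all_reals all_analysis.
Set Implicit Arguments. Unset Strict Implicit. Unset Printing Implicit Defensive.
Import Order.TTheory GRing.Theory Num.Theory.
Local Open Scope classical_set_scope.
Local Open Scope ring_scope.

(* Supremum of a set of reals, valued in the extended reals, with the
   paper's convention sup(empty) = 0. *)
Definition paper_sup (R : realType) (S : set R) : \bar R :=
  if pselect (S = set0) then 0%E else ereal_sup (EFin @` S).

(* Values E[g(Y)] for discrete random vectors Y in R^d, described through
   their law  sum_i p_i delta_{a_i}  with n <= k+1 atoms a_i (all possible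
   values, p_i = Pr{Y = a_i} > 0), such that Pr{Y in A} = 1 (all a_i in A)
   and E[f(Y)] = sum_i p_i f(a_i) lies in B. *)
Definition discrete_values (R : realType) (d k : nat)
    (A : set 'rV[R]_d) (B : set 'rV[R]_k)
    (f : 'rV[R]_d -> 'rV[R]_k) (g : 'rV[R]_d -> R) : set R :=
  [set r | exists (n : nat) (a : 'I_n -> 'rV[R]_d) (p : 'I_n -> R),
      [/\ (n <= k.+1)%N, (forall i, 0 < p i), \sum_(i < n) p i = 1,
          (forall i, A (a i)) &
          B (\sum_(i < n) p i *: f (a i)) /\
          r = \sum_(i < n) p i * g (a i)]].

From HB Require Import structures.
From mathcomp Require Import all_boot all_order all_algebra.
From mathcomp Require Import all_classical all_reals all_analysis.
From mathcomp Require Import ring lra.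
Import Order.TTheory GRing.Theory Num.Theory.
Local Open Scope classical_set_scope.
Local Open Scope ring_scope.

Set Implicit Arguments.
Unset Strict Implicit.
Unset Printing Implicit Defensive.

(* The moment vector E[(g, f)(X)] is a finite convex combination of points
   (g, f)(a) with a in A.  Otherwise the cone of "moment gaps" avoids 0, and a
   supporting functional of it (built one coordinate at a time) yields a
   nontrivial affine phi >= 0 on (g, f)(A) with phi(E[(g, f)(X)]) <= 0; then
   phi((g, f)(X)) = 0 a.s., X lives on a hyperplane on which one moment is an
   affine function of the others, and we induct on the number of moments.
   Caratheodory's argument then lowers the number of atoms to k + 1: while
   there are more, the vectors (f(a_i), 1) are linearly dependent, and moving
   the weights along a dependence that does not decrease the g-mean kills one
   weight without changing the f-mean. *)

Lemma uniq_option_seq (I : eqType) (J : seq I) : uniq J -> uniq (None :: map Some J).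
Proof.
by move=> uJ; rewrite /= map_inj_uniq ?uJ ?andbT; [apply/mapP => -[] | move=> ? ? []].
Qed.

Definition supported_in (R : realType) (U : eqType) (A : set U) (l : seq (R * U)) :=
  forall p, p \in l -> 0 < p.1 /\ A p.2.

Section ConeSeparation.
Variables (R : realType) (I : eqType).
Implicit Types (J : seq I) (u x y z : I -> R) (C : set (I -> R)).

Definition dot J u x : R := \sum_(i <- J) u i * x i.

Definition cone C :=
  (forall x y, C x -> C y -> C (fun i => x i + y i)) /\
  (forall s x, 0 < s -> C x -> C (fun i => s * x i)).

Lemma dot_comb J u (s t : R) x y :
  dot J u (fun i => s * x i + t * y i) = s * dot J u x + t * dot J u y.
Proof.
rewrite /dot !mulr_sumr -big_split /=; apply: eq_bigr => i _; ring.
Qed.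

Lemma dot_cons_update j J (a : R) u x : j \notin J ->
  dot (j :: J) (fun i => if i == j then a else u i) x = a * x j + dot J u x.
Proof.
move=> jJ; rewrite /dot big_cons eqxx; congr (_ + _); apply: eq_big_seq => i iJ.
by case: eqP => // eij; rewrite -eij iJ in jJ.
Qed.

Lemma dot_rem j J u x : j \in J -> dot J u x = u j * x j + dot (rem j J) u x.
Proof. by move=> jJ; rewrite /dot (perm_big _ (perm_to_rem jJ)) big_cons. Qed.

Lemma exists_between (L V : set R) : L !=set0 -> V !=set0 ->
  (forall l v, L l -> V v -> l <= v) -> exists a, ubound L a /\ lbound V a.
Proof.
move=> [l0 Ll0] [v0 Vv0] LV; exists (sup L); split.
  by apply: ub_le_sup; exists v0 => l /LV; apply.
by move=> v Vv; apply: ge_sup; [exists l0 | move=> l /LV; apply].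
Qed.

(* [a] is squeezed between the [- u.x / x j] (x j > 0) and the [u.y / - y j]
   (y j < 0); these are ordered because [- y j * x + x j * y] lies in the
   slice [z j = 0]. *)
Lemma cone_extend_coordinate j J u C : cone C ->
    (exists2 x, C x & 0 < x j) -> (exists2 y, C y & y j < 0) ->
    (forall z, C z -> z j = 0 -> 0 <= dot J u z) ->
  exists a, forall z, C z -> 0 <= a * z j + dot J u z.
Proof.
move=> [Cadd Cscale] [x1 Cx1 x1j] [y1 Cy1 y1j] slice_ge0.
have ratio_le x y : C x -> 0 < x j -> C y -> y j < 0 ->
    - dot J u x / x j <= dot J u y / - y j.
  move=> Cx xj Cy yj; have yj' : 0 < - y j by rewrite oppr_gt0.
  have Cmix : C (fun i => - y j * x i + x j * y i).
    by apply: Cadd; apply: Cscale.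
  have h : 0 <= - y j * dot J u x + x j * dot J u y.
    by rewrite -dot_comb; apply: slice_ge0 => //; ring.
  by rewrite ler_pdivrMr // mulrAC ler_pdivlMr //; lra.
pose L := [set - dot J u x / x j | x in [set x | C x /\ 0 < x j]].
pose V := [set dot J u y / - y j | y in [set y | C y /\ y j < 0]].
have [|||a [La Va]] := @exists_between L V.
- by exists (- dot J u x1 / x1 j), x1.
- by exists (dot J u y1 / - y1 j), y1.
- by move=> _ _ [x [Cx xj] <-] [y [Cy yj] <-]; apply: ratio_le.
exists a => z Cz; case: (ltgtP (z j) 0) => zj.
- have zj' : 0 < - z j by rewrite oppr_gt0.
  by have := Va _ (ex_intro2 _ _ z (conj Cz zj) erefl); rewrite ler_pdivlMr //; lra.
- by have := La _ (ex_intro2 _ _ z (conj Cz zj) erefl); rewrite ler_pdivrMr //; lra.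
- by rewrite zj mulr0 add0r; apply: slice_ge0.
Qed.

Lemma cone_slice j C : cone C -> cone [set z | C z /\ z j = 0].
Proof.
move=> [Cadd Cscale]; split.
  by move=> x y [Cx xj] [Cy yj]; split; [apply: Cadd | rewrite xj yj addr0].
by move=> s x s_gt0 [Cx xj]; split; [apply: Cscale | rewrite xj mulr0].
Qed.

Lemma cone_separation J C : uniq J -> C !=set0 -> cone C ->
    (forall x, C x -> has (fun i => x i != 0) J) ->
  exists2 u, has (fun i => u i != 0) J & forall x, C x -> 0 <= dot J u x.
Proof.
elim: J C => [|j J IH] C; first by move=> _ [x Cx] _ /(_ x Cx).
move=> /= /andP[jJ uJ] [x0 Cx0] coneC Cnz.
pose ej (a : R) i := if i == j then a else 0.
have dot_ej a x : dot (j :: J) (ej a) x = a * x j.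
  by rewrite dot_cons_update // /dot big1 ?addr0 // => i _; rewrite mul0r.
have [[y Cy yj]|yj_ge0] := pselect (exists2 y, C y & y j < 0); last first.
  exists (ej 1); first by rewrite /= /ej eqxx oner_neq0.
  move=> x Cx; rewrite dot_ej mul1r leNgt; apply/negP => xj.
  by apply: yj_ge0; exists x.
have [[x Cx xj]|xj_le0] := pselect (exists2 x, C x & 0 < x j); last first.
  exists (ej (-1)); first by rewrite /= /ej eqxx oppr_eq0 oner_neq0.
  move=> z Cz; rewrite dot_ej mulN1r oppr_ge0 leNgt; apply/negP => zj.
  by apply: xj_le0; exists z.
have [|||u' u'nz u'ge0] := IH [set z | C z /\ z j = 0] uJ.
- exists (fun i => - y j * x i + x j * y i); split; last by ring.
  by case: coneC => Cadd Cscale; apply: Cadd; apply: Cscale; rewrite ?oppr_gt0.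
- exact: cone_slice.
- by move=> z [Cz zj]; have := Cnz z Cz; rewrite /= zj eqxx.
have [a ha] : exists a, forall z, C z -> 0 <= a * z j + dot J u' z.
  apply: cone_extend_coordinate => //; [by exists x | by exists y |].
  by move=> z Cz zj; apply: u'ge0.
exists (fun i => if i == j then a else u' i).
  rewrite /= (@eq_in_has _ _ (fun i => u' i != 0)) ?u'nz ?orbT // => i iJ /=.
  by have -> : (i == j) = false by apply: contraNF jJ => /eqP <-.
by move=> z Cz; rewrite dot_cons_update //; apply: ha.
Qed.

End ConeSeparation.

Lemma ae_ge0_integral_le0 (R : realType) (dT : measure_display)
    (T : measurableType dT) (mu : {measure set T -> \bar R}) (h : T -> R) :
    mu.-integrable setT (fun t => (h t)%:E) -> {ae mu, forall t, 0 <= h t} ->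
    (\int[mu]_t (h t)%:E <= 0)%E ->
  {ae mu, forall t, h t = 0} /\ (\int[mu]_t (h t)%:E = 0)%E.
Proof.
move=> ih h_ge0 int_le0; have mh := measurable_int _ ih.
have int_abs : (\int[mu]_t `|(h t)%:E| = \int[mu]_t (h t)%:E)%E.
  apply: ae_eq_integral => //; first exact: measurable_int (integrable_abse ih).
  by apply: filterS h_ge0 => t ht _; rewrite gee0_abs // lee_fin.
have int0 : (\int[mu]_t (h t)%:E = 0)%E.
  apply/eqP; rewrite eq_le int_le0 -int_abs.
  by apply: integral_ge0 => t _; exact: abse_ge0.
split=> //; have := (ae_eq_integral_abs mu measurableT mh).1 (etrans int_abs int0).
by apply: filterS => t /(_ Logic.I) [].
Qed.

Section MeanRepresentation.
Variables (R : realType) (dT : measure_display) (T : measurableType dT).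
Variables (P : probability T R) (U I : eqType) (F : U -> I -> R) (X : T -> U).
Hypothesis intF : forall i, P.-integrable setT (fun t => (F (X t) i)%:E).
Implicit Types (J : seq I) (A : set U) (l : seq (R * U)) (c : R) (u : I -> R).

Definition mean i : R := fine (\int[P]_t (F (X t) i)%:E).

Lemma integral_affine J c u :
  P.-integrable setT (fun t => (c + dot J u (F (X t)))%:E) /\
  (\int[P]_t (c + dot J u (F (X t)))%:E = (c + dot J u mean)%:E)%E.
Proof.
have -> : (fun t => (c + dot J u (F (X t)))%:E) = (fun t =>
    cst c%:E t + \sum_(i <- J) (u i)%:E * (F (X t) i)%:E)%E.
  by apply: funext => t; rewrite EFinD /dot -sumEFin; under eq_bigr do rewrite EFinM.
have intZ i : P.-integrable setT (fun t => (u i)%:E * (F (X t) i)%:E)%E.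
  exact: integrableZl.
have intc : P.-integrable setT (cst c%:E).
  exact: finite_measure_integrable_cst.
split; first by apply: integrableD => //; exact: integrable_sum.
rewrite integralD //; last exact: integrable_sum.
rewrite integral_cst // [X in (_ * X)%E]probability_setT mule1 integral_sum // EFinD /dot -sumEFin.
congr (_ + _)%E; apply: eq_bigr => i _.
by rewrite integralZl // EFinM /mean fineK //; exact: integrable_fin_num.
Qed.

Definition fmean l i : R := \sum_(p <- l) p.1 * F p.2 i.

Definition represents_means J A l :=
  [/\ supported_in A l, \sum_(p <- l) p.1 = 1 & {in J, fmean l =1 mean}].

Lemma dot_fmean J u l : dot J u (fmean l) = \sum_(p <- l) p.1 * dot J u (F p.2).
Proof.
rewrite /dot /fmean; under eq_bigr do rewrite mulr_sumr.
rewrite exchange_big; apply: eq_bigr => p _; rewrite mulr_sumr.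
by apply: eq_bigr => i _; ring.
Qed.

(* [moment_gap l t] compares the moments of the finite measure [l] with [t]
   times the target moments; the coordinate [None] compares total masses. *)
Definition moment_gap l (t : R) (o : option I) : R :=
  if o is Some i then fmean l i - t * mean i else \sum_(p <- l) p.1 - t.

Definition moment_cone A : set (option I -> R) :=
  [set x | exists l t, [/\ supported_in A l, 0 <= t,
     0 < \sum_(p <- l) p.1 + t & x = moment_gap l t]].

Lemma fmean_affine J c u l :
  \sum_(p <- l) p.1 * (c + dot J u (F p.2)) =
  c * \sum_(p <- l) p.1 + dot J u (fmean l).
Proof.
under eq_bigr do rewrite mulrDr.
by rewrite big_split /= -mulr_suml mulrC dot_fmean.
Qed.

Lemma dot_moment_gap J c u l t :
  dot (None :: map Some J) (fun o => if o is Some i then u i else c)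
      (moment_gap l t) =
  \sum_(p <- l) p.1 * (c + dot J u (F p.2)) - t * (c + dot J u mean).
Proof.
rewrite {1}/dot big_cons big_map /= fmean_affine.
have -> : \sum_(i <- J) u i * (fmean l i - t * mean i) =
    dot J u (fun i => 1 * fmean l i + (- t) * mean i).
  by apply: eq_bigr => i _; rewrite mul1r mulNr.
by rewrite dot_comb; ring.
Qed.

Lemma cone_moment_cone A : cone (moment_cone A).
Proof.
split.
  move=> _ _ [l1 [t1 [l1A t1_ge0 pos1 ->]]] [l2 [t2 [l2A t2_ge0 pos2 ->]]].
  exists (l1 ++ l2), (t1 + t2); split.
  - by move=> p; rewrite mem_cat => /orP[/l1A|/l2A].
  - by rewrite addr_ge0.
  - by rewrite big_cat /=; lra.
  - by apply: funext => -[i|]; rewrite /= /fmean !big_cat /=; ring.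
move=> s _ s_gt0 [l [t [lA t_ge0 pos ->]]].
exists [seq (s * p.1, p.2) | p <- l], (s * t); split.
- by move=> _ /mapP[p /lA[p1 p2] ->]; split => //; exact: mulr_gt0.
- exact: mulr_ge0 (ltW s_gt0) t_ge0.
- by rewrite big_map -mulr_sumr -mulrDr mulr_gt0.
- apply: funext => -[i|]; rewrite /= /fmean big_map /= mulrBr mulr_sumr //.
  by rewrite mulrA; congr (_ - _); apply: eq_bigr => p _; rewrite mulrA.
Qed.

Lemma moment_cone_nz J A : ~ (exists l, represents_means J A l) ->
  forall x, moment_cone A x -> has (fun o => x o != 0) (None :: map Some J).
Proof.
move=> norep _ [l [t [lA t_ge0 pos ->]]]; apply: contra_notT norep => /hasPn gap0.
have mass_t : \sum_(p <- l) p.1 = t.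
  by apply/eqP; have := gap0 None (mem_head _ _); rewrite negbK subr_eq0.
have t_gt0 : 0 < t by lra.
exists [seq (p.1 / t, p.2) | p <- l]; split.
- by move=> _ /mapP[p /lA[p1 p2] ->]; split => //; exact: divr_gt0.
- by rewrite big_map -mulr_suml mass_t divff // gt_eqF.
- move=> i iJ; have := gap0 (Some i); rewrite /= in_cons map_f // negbK subr_eq0.
  move=> /(_ isT) /eqP fmean_eq; rewrite /fmean big_map /=.
  under eq_bigr do rewrite mulrAC.
  by rewrite -mulr_suml -/(fmean l i) fmean_eq mulrAC divff ?mul1r // gt_eqF.
Qed.

Lemma separating_affine J A : uniq J -> ~ (exists l, represents_means J A l) ->
  exists c u, [/\ (c != 0) || has (fun i => u i != 0) J,
    forall a, A a -> 0 <= c + dot J u (F a) & c + dot J u mean <= 0].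
Proof.
move=> uJ norep.
have [|||v v_nz v_ge0] := cone_separation (uniq_option_seq uJ) (C := moment_cone A).
- by exists (moment_gap [::] 1), [::], 1; rewrite big_nil add0r.
- exact: cone_moment_cone.
- exact: moment_cone_nz.
have v_eta : v = fun o => if o is Some i then v (Some i) else v None.
  by apply: funext => -[].
rewrite {}v_eta in v_ge0.
exists (v None), (fun i => v (Some i)); split.
- by move: v_nz; rewrite /= has_map.
- move=> a Aa; have := v_ge0 (moment_gap [:: (1, a)] 0).
  rewrite dot_moment_gap big_seq1 mul1r mul0r subr0; apply.
  exists [:: (1, a)], 0; split; rewrite ?big_seq1 ?addr0 //.
  by move=> p; rewrite mem_seq1 => /eqP ->.
- have := v_ge0 (moment_gap [::] 1); rewrite dot_moment_gap big_nil mul1r sub0r oppr_ge0.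
  by apply; exists [::], 1; rewrite big_nil add0r.
Qed.

Lemma affine_relation J A : uniq J -> {ae P, forall t, A (X t)} ->
    ~ (exists l, represents_means J A l) ->
  exists c u, [/\ has (fun i => u i != 0) J,
    {ae P, forall t, c + dot J u (F (X t)) = 0} & c + dot J u mean = 0].
Proof.
move=> uJ AX norep.
have [c [u [nontriv ge0_on_A mean_le0]]] := separating_affine uJ norep.
have [int_affine integral_affine_eq] := integral_affine J c u.
have int_le0 : (\int[P]_t (c + dot J u (F (X t)))%:E <= 0)%E.
  by rewrite integral_affine_eq lee_fin.
have ae_ge0 : {ae P, forall t, 0 <= c + dot J u (F (X t))}.
  by apply: filterS AX => t; apply: ge0_on_A.
have [ae0 int0] := ae_ge0_integral_le0 int_affine ae_ge0 int_le0.
have mean0 : c + dot J u mean = 0 by move: int0; rewrite integral_affine_eq => -[].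
exists c, u; split => //; apply: contraTT nontriv => /hasPn u_eq0.
have dot0 : dot J u mean = 0.
  by rewrite /dot big1_seq // => i /andP[_ /u_eq0]; rewrite negbK => /eqP ->; rewrite mul0r.
rewrite negb_or negbK; apply/andP; split; last exact/hasPn.
by move: mean0; rewrite dot0 addr0 => ->.
Qed.

(* Induction on the number of moments: the a.s. affine relation confines [X]
   to the hyperplane [H], on which the moment [j] (with [u j != 0]) is an
   affine function of the others. *)
Lemma means_representable J A : uniq J -> {ae P, forall t, A (X t)} ->
  exists l, represents_means J A l.
Proof.
move: {2}(size J) (leqnn (size J)) => n; elim: n J A => [|n IH] J A sJ uJ AX;
  have [//|norep] := pselect (exists l, represents_means J A l);
  have [c [u [/hasP[j jJ uj] ae0 mean0]]] := affine_relation uJ AX norep.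
  by move: sJ; rewrite leqn0 => /nilP J0; rewrite J0 in jJ.
pose H := [set a | A a /\ c + dot J u (F a) = 0].
have [|||l [lH mass1 fmean_eq]] := IH (rem j J) H.
- by rewrite size_rem //; case: (size J) sJ.
- exact: rem_uniq.
- by apply: filterS2 AX ae0 => t; split.
exfalso; apply: norep; exists l; split => //; first by move=> p /lH[? []].
have fmean_eq_rem : dot (rem j J) u (fmean l) = dot (rem j J) u mean.
  by apply: eq_big_seq => i /fmean_eq ->.
have fmean0 : c + dot J u (fmean l) = 0.
  rewrite -[c]mulr1 -mass1 -fmean_affine big1_seq // => p /andP[_ /lH[_ [_ ->]]].
  by rewrite mulr0.
move=> i iJ; case: (eqVneq i j) => [->|ij]; last first.
  by apply: fmean_eq; rewrite mem_rem_uniq // inE ij.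
apply: (mulfI uj); move: fmean0 mean0; rewrite !(dot_rem _ _ jJ) fmean_eq_rem.
by move=> e1 e2; lra.
Qed.

End MeanRepresentation.

Lemma affine_dependence (K : fieldType) (k N : nat) (v : 'I_N -> 'rV[K]_k) :
  (k.+1 < N)%N ->
  exists w : 'I_N -> K,
    [/\ \sum_i w i *: v i = 0, \sum_i w i = 0 & exists i, w i != 0].
Proof.
move=> kN; pose M : 'M[K]_(N, k + 1) := row_mx (\matrix_i v i) (const_mx 1).
have /rowV0Pn[w /sub_kermxP] : kermx M != 0.
  rewrite kermx_eq0 /row_free; apply: contraTneq kN => <-.
  by rewrite -leqNgt -[k.+1]addn1 rank_leq_col.
rewrite mul_mx_row => /eqP; rewrite row_mx_eq0 => /andP[/eqP wv /eqP w1] w_nz.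
exists (w 0); split.
- by rewrite -[RHS]wv mulmx_sum_row; apply: eq_bigr => i _; rewrite rowK.
- have := congr1 (fun m : 'M[K]_(1, 1) => m 0 0) w1; rewrite /= !mxE => w1'.
  by rewrite -[RHS]w1'; apply: eq_bigr => i _; rewrite mxE mulr1.
- apply/existsP; apply: contraNT w_nz; rewrite negb_exists => /forallP w0.
  by apply/eqP/rowP => i; rewrite mxE; apply/eqP/negPn/w0.
Qed.

Lemma sum_eq0_has_neg (R : realDomainType) N (w : 'I_N -> R) :
  \sum_i w i = 0 -> (exists i, w i != 0) -> exists i, w i < 0.
Proof.
move=> w1 [j wj]; apply/existsP; apply: contraNT wj; rewrite negb_exists.
move=> /forallP w_ge0; have {}w_ge0 i : 0 <= w i by rewrite leNgt w_ge0.
by apply/eqP/(psumr_eq0P (fun i _ => w_ge0 i) w1).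
Qed.

Lemma exists_zeroing_shift (R : realFieldType) N (lam w : 'I_N -> R) :
  (forall i, 0 <= lam i) -> (exists i, w i < 0) ->
  exists t i0, [/\ 0 <= t, forall i, 0 <= lam i + t * w i & lam i0 + t * w i0 = 0].
Proof.
move=> lam_ge0 [i1 wi1].
case: (@arg_minP _ _ _ i1 (fun i => w i < 0) (fun i => lam i / - w i) wi1).
move=> i0 wi0 i0_min; pose t := lam i0 / - w i0.
have wi0' : 0 < - w i0 by rewrite oppr_gt0.
exists t, i0; split.
- by rewrite divr_ge0 // ltW.
- move=> i; case: (lerP 0 (w i)) => wi.
    by rewrite addr_ge0 // mulr_ge0 // divr_ge0 // ltW.
  have := i0_min i wi; rewrite -/t ler_pdivlMr ?oppr_gt0 //; lra.
- by rewrite /t invrN mulrN mulNr divfK ?subrr // lt_eqF.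
Qed.

Section Caratheodory.
Variables (R : realType) (U : eqType) (k : nat).
Variables (A : set U) (f : U -> 'rV[R]_k) (g : U -> R).

Definition small_support_dominates (m : 'rV[R]_k) (r : R) :=
  exists n (b : 'I_n -> U) (p : 'I_n -> R),
    [/\ (n <= k.+1)%N, (forall i, 0 < p i), \sum_i p i = 1, (forall i, A (b i)) &
      \sum_i p i *: f (b i) = m /\ r <= \sum_i p i * g (b i)].

Lemma small_support_dominates_le m r r' : r <= r' -> small_support_dominates m r' -> small_support_dominates m r.
Proof.
move=> rr' [n [b [p [kn p_gt0 mass1 bA [fb r'_le]]]]].
by exists n, b, p; split => //; split => //; exact: le_trans r'_le.
Qed.

Lemma caratheodory N (a : 'I_N -> U) lam : (forall i, 0 <= lam i) ->
    \sum_i lam i = 1 -> (forall i, A (a i)) ->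
  small_support_dominates (\sum_i lam i *: f (a i)) (\sum_i lam i * g (a i)).
Proof.
elim: N a lam => [|N IH] a lam lam_ge0 mass1 aA.
  by move: mass1; rewrite big_ord0 => /eqP; rewrite eq_sym oner_eq0.
have drop i0 lam' : (forall i, 0 <= lam' i) -> lam' i0 = 0 -> \sum_i lam' i = 1 ->
    small_support_dominates (\sum_i lam' i *: f (a i)) (\sum_i lam' i * g (a i)).
  move=> lam'_ge0 lam'0; rewrite !(bigD1_ord i0) //= lam'0 scale0r mul0r !add0r.
  by move=> mass'; apply: IH.
have [[i0 lam0]|lam_nz] := pselect (exists i, lam i = 0); first exact: drop lam0 _.
have lam_gt0 i : 0 < lam i.
  by rewrite lt_neqAle lam_ge0 andbT eq_sym; apply/eqP => li; apply: lam_nz; exists i.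
have [small|big] := leqP N.+1 k.+1; first by exists N.+1, a, lam.
have [w [wf w1 w_nz]] := affine_dependence (fun i => f (a i)) big.
wlog wg : w wf w1 w_nz / 0 <= \sum_i w i * g (a i).
  move=> gen; case: (lerP 0 (\sum_i w i * g (a i))) => [|wg]; first exact: gen.
  apply: (gen (fun i => - w i)).
  - by under eq_bigr do rewrite scaleNr; rewrite sumrN wf oppr0.
  - by rewrite sumrN w1 oppr0.
  - by case: w_nz => i wi; exists i; rewrite oppr_eq0.
  - by under eq_bigr do rewrite mulNr; rewrite sumrN oppr_ge0 ltW.
have [t [i0 [t_ge0 shift_ge0 shift0]]] :=
  exists_zeroing_shift lam_ge0 (sum_eq0_has_neg w1 w_nz).
have mass' : \sum_i (lam i + t * w i) = 1.
  by rewrite big_split /= -mulr_sumr w1 mulr0 addr0.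
have := drop i0 (fun i => lam i + t * w i) shift_ge0 shift0 mass'.
have -> : \sum_i (lam i + t * w i) *: f (a i) = \sum_i lam i *: f (a i).
  under eq_bigr do rewrite scalerDl -scalerA.
  by rewrite big_split /= -scaler_sumr wf scaler0 addr0.
apply: small_support_dominates_le.
under [leRHS]eq_bigr do rewrite mulrDl -mulrA.
by rewrite big_split /= -mulr_sumr lerDl mulr_ge0.
Qed.

Lemma caratheodory_seq l : supported_in A l -> \sum_(q <- l) q.1 = 1 ->
  small_support_dominates (\sum_(q <- l) q.1 *: f q.2) (\sum_(q <- l) q.1 * g q.2).
Proof.
move=> lA; have lA_tnth i := lA _ (mem_tnth i (in_tuple l)).
rewrite !(big_tnth _ _ l) => mass1.
apply: (@caratheodory _ (fun i => (tnth _ i).2) (fun i => (tnth _ i).1)) => [i||i].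
- exact: ltW (lA_tnth i).1.
- exact: mass1.
- exact: (lA_tnth i).2.
Qed.

End Caratheodory.

Lemma paper_sup_ub (R : realType) (S : set R) r : S r -> (r%:E <= paper_sup S)%E.
Proof.
rewrite /paper_sup => Sr; destruct (pselect _) as [S0|S_nonempty]; first by rewrite S0 in Sr.
by apply: ereal_sup_ubound; exists r.
Qed.

Lemma small_support_dominates_le_paper_sup (R : realType) (d k : nat) (A : set 'rV[R]_d)
    (B : set 'rV[R]_k) f g m r :
  small_support_dominates A f g m r -> B m -> (r%:E <= paper_sup (discrete_values A B f g))%E.
Proof.
move=> [n [b [p [kn p_gt0 mass1 bA [fb r_le]]]]] Bm.
apply: le_trans (paper_sup_ub (r := \sum_i p i * g (b i)) _); first by rewrite lee_fin.
by exists n, b, p; split => //; split => //; rewrite fb.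
Qed.

Theorem theorem3 (R : realType) (d k : nat) (hd : (0 < d)%N) (hk : (0 < k)%N)
    (A : set 'rV[R]_d) (B : set 'rV[R]_k)
    (f : 'rV[R]_d -> 'rV[R]_k) (g : 'rV[R]_d -> R)
    (dT : measure_display) (T : measurableType dT) (P : probability T R)
    (X : T -> 'rV[R]_d)
    (mX : forall j : 'I_d, measurable_fun setT (fun t => X t ord0 j))
    (mA : measurable (X @^-1` A))
    (hA : P (X @^-1` A) = 1%E)
    (intf : forall j : 'I_k, P.-integrable setT (fun t => (f (X t) ord0 j)%:E))
    (hB : B (\row_(j < k) fine (\int[P]_t (f (X t) ord0 j)%:E)))
    (intg : P.-integrable setT (fun t => (g (X t))%:E)) :
  (\int[P]_t (g (X t))%:E <= paper_sup (discrete_values A B f g))%E.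
Proof.
pose F a (o : option 'I_k) := if o is Some j then f a ord0 j else g a.
have intF o : P.-integrable setT (fun t => (F (X t) o)%:E) by case: o.
have AX : {ae P, forall t, A (X t)}.
  apply/negligibleP; first exact: measurableC.
  by have := probability_setC P mA; rewrite hA subee.
have [l [lA mass1 fmean_eq]] :=
  means_representable intF (uniq_option_seq (enum_uniq 'I_k)) AX.
have f_mean : \sum_(q <- l) q.1 *: f q.2 =
    \row_(j < k) fine (\int[P]_t (f (X t) ord0 j)%:E).
  apply/rowP => j; rewrite !mxE summxE.
  have jJ : Some j \in None :: map Some (enum 'I_k) by rewrite in_cons map_f ?mem_enum.
  rewrite -[RHS]/(mean P F X (Some j)) -(fmean_eq _ jJ).
  by apply: eq_bigr => q _; rewrite mxE.
have g_mean : (\int[P]_t (g (X t))%:E = (\sum_(q <- l) q.1 * g q.2)%:E)%E.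
  rewrite -[LHS]fineK ?integrable_fin_num // -[fine _]/(mean P F X None).
  by rewrite -(fmean_eq _ (mem_head _ _)).
rewrite g_mean; apply: small_support_dominates_le_paper_sup (caratheodory_seq f g lA mass1) _.
by rewrite f_mean.
Qed.
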